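(* The max-min fairness mechanism (MMF) is efficient, fair, and strategy-proof. That is, for every $n\ge 1$, every vector of entitlements $e_1,\dots,e_n>0$ with $\sum_i e_i=1$, and for agents whose utilities are as described in the context: (i) (efficiency) for every vector of true demands $d^*\in\mathbb{R}_+^n$, if every agent reports her true demand and $a$ is the MMF output, then $\ell(d^*,a)=0$; (ii) (fairness) for every agent $i$ who reports her true demand $d_i^*$ and for any demands reported by the other agents, the MMF output $a$ satisfies $u_i(a_i)\ge u_i(e_i)$; (iii) (strategy-proofness) for every agent $i$ and every fixed vector of demands reported by the other agents, if $a^\star$ is the MMF output when $i$ reports $d_i^*$ and $a$ is the MMF output when $i$ reports any other $d_i\ge 0$, then $u_i(a^\star_i)\ge u_i(a_i)$.
   Context: A divisible resource of total size $1$ is shared by $n$ agents; agent $i$ has entitlement $e_i>0$ with $\sum_i e_i=1$. Agent $i$ has a true demand $d_i^*\ge 0$ and a utility $u_i:\mathbb{R}_+\to\mathbb{R}_+$ that is strictly increasing on $[0,d_i^*]$ and satisfies $u_i(x)=u_i(d_i^* )$ for all $x\ge d_i^*$. MMF: given entitlements $e$ and reported demands $d_1,\dots,d_n\ge 0$, set $r=1$, $E=1$, $S=\{1,\dots,n\}$, $a=0\in\mathbb{R}^n$. Process the agents $j$ in ascending order of $d_j/e_j$. For the current $j$: if $d_j<r e_j/E$, set $a_j=d_j$, remove $j$ from $S$, update $r\leftarrow r-d_j$, $E\leftarrow E-e_j$, and continue with the next agent; otherwise set $a_k=r e_k/E$ for all $k\in S$ and stop. Output $a$. For $d,a\in\mathbb{R}_+^n$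 let $\ell_{ur}(a)=1-\sum_i a_i$, $\ell_{or}(d,a)=\sum_i (a_i-d_i)^+$, $\ell_{ud}(d,a)=\sum_i(d_i-a_i)^+$ (with $y^+=\max(y,0)$), and $\ell(d,a)=\min\big(\ell_{ur}(a)+\ell_{or}(d,a),\,\ell_{ud}(d,a)\big)$. *)

From HB Require Import structures.
From mathcomp Require Import all_boot all_order all_algebra.
Set Implicit Arguments. Unset Strict Implicit. Unset Printing Implicit Defensive.
Import Order.TTheory GRing.Theory Num.Theory.
Local Open Scope ring_scope.

Section MMF.
Variables (R : realFieldType) (n : nat).

Definition pospart (y : R) : R := Num.max y 0.

Definition mmf_order (e d : 'I_n -> R) : seq 'I_n :=
  sort (fun i j => d i / e i <= d j / e j) (enum 'I_n).

(* Main loop: s = remaining agents (the set S, in processing order),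
   r = remaining resource, E = remaining entitlement, a = current allocation. *)
Fixpoint mmf_loop (e d : 'I_n -> R) (s : seq 'I_n) (r E : R) (a : 'I_n -> R)
  : 'I_n -> R :=
  match s with
  | [::] => a
  | j :: s' =>
      if d j < r * e j / E then
        mmf_loop e d s' (r - d j) (E - e j) (fun k => if k == j then d j else a k)
      else
        fun k => if k \in s then r * e k / E else a k
  end.

Definition mmf (e d : 'I_n -> R) : 'I_n -> R :=
  mmf_loop e d (mmf_order e d) 1 1 (fun _ => 0).

Definition loss_ur (a : 'I_n -> R) : R := 1 - \sum_i a i.
Definition loss_or (d a : 'I_n -> R) : R := \sum_i pospart (a i - d i).
Definition loss_ud (d a : 'I_n -> R) : R := \sum_i pospart (d i - a i).
Definition loss (d a : 'I_n -> R) : R :=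
  Num.min (loss_ur a + loss_or d a) (loss_ud d a).

End MMF.

From HB Require Import structures.
From mathcomp Require Import all_boot all_order all_algebra.
From mathcomp Require Import lra.
Set Implicit Arguments. Unset Strict Implicit. Unset Printing Implicit Defensive.
Import Order.TTheory GRing.Theory Num.Theory.
Local Open Scope ring_scope.

(* MMF always returns a water-filling allocation: for some level [lam >= 1]
   every agent gets [min (d k) (lam * e k)], and either the whole resource is
   handed out or every demand is met.  Along the loop this is an invariant:
   the agents already processed (in increasing order of [d k / e k]) are served
   in full and have ratio at most the current level [r / E >= 1]; the first
   agent whose ratio reaches the level fixes [lam := r / E] for everyone left.
   Efficiency is immediate, fairness holds because [lam >= 1], and for
   strategy-proofness: if a truthful agent [i] is capped at [lam' * e i], any
   report giving her more needs a level [lam > lam'], which gives every other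
   agent at least as much too and so exceeds the unit resource. *)

Section SaturatingUtility.
Variables (R : realFieldType) (f : R -> R) (c : R).
Hypothesis c_ge0 : 0 <= c.
Hypothesis f_incr : forall x y, 0 <= x -> x < y -> y <= c -> f x < f y.
Hypothesis f_sat : forall x, c <= x -> f x = f c.

Lemma sat_util_minE x : f x = f (Num.min x c).
Proof. by case: leP => // /ltW /f_sat. Qed.

Lemma sat_util_mono x y : 0 <= x -> x <= y -> f x <= f y.
Proof.
move=> x_ge0 xy; rewrite [f x]sat_util_minE [f y]sat_util_minE.
have xc_ge0 : 0 <= Num.min x c by rewrite le_min x_ge0.
have : Num.min x c <= Num.min y c by rewrite le_min !ge_min lexx xy orbT.
rewrite le_eqVlt => /predU1P [-> // | lt_xy].
by apply/ltW/f_incr; rewrite ?ge_min ?lexx ?orbT.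
Qed.

End SaturatingUtility.

Section WaterFilling.
Variables (R : realFieldType) (n : nat) (e : 'I_n -> R).
Hypothesis e_gt0 : forall i, 0 < e i.

Definition water_filling (d b : 'I_n -> R) : Prop :=
  exists2 lam : R, 1 <= lam &
    [/\ forall k, b k = Num.min (d k) (lam * e k), \sum_k b k <= 1
      & \sum_k b k = 1 \/ forall k, b k = d k].

Lemma water_filling_served d b :
  (forall k, b k = d k) -> \sum_k b k <= 1 -> water_filling d b.
Proof.
move=> bE sum_le1; exists (1 + \sum_k `|d k| / e k).
  by rewrite lerDl sumr_ge0 // => k _; rewrite divr_ge0 // ltW.
split=> //; last by right.
move=> k; rewrite bE min_l // -ler_pdivrMr //.
apply: le_trans (ler_norm _) _; rewrite normrM normfV (gtr0_norm (e_gt0 k)).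
rewrite (bigD1 k) //= addrCA lerDl addr_ge0 // sumr_ge0 // => j _.
by rewrite divr_ge0 // ltW.
Qed.

Lemma water_filling_le d b : water_filling d b -> forall k, b k <= d k.
Proof. by case=> lam _ [bE _ _] k; rewrite bE ge_min lexx. Qed.

Lemma water_filling_ge0 d b k : 0 <= d k -> water_filling d b -> 0 <= b k.
Proof.
move=> d_ge0 [lam lam_ge1 [-> _ _]].
have lam_ge0 : 0 <= lam by apply: le_trans lam_ge1.
by rewrite le_min d_ge0 mulr_ge0 // ltW.
Qed.

Lemma water_filling_entitlement d b k :
  water_filling d b -> Num.min (e k) (d k) <= b k.
Proof.
case=> lam lam_ge1 [-> _ _]; rewrite le_min !ge_min lexx orbT /=.
by rewrite ler_peMl // ltW.
Qed.

Lemma water_filling_loss d b : water_filling d b -> loss d b = 0.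
Proof.
move=> wf; have [lam _ [_ sum_le1 full_or_served]] := wf.
have loss_or0 : loss_or d b = 0.
  rewrite /loss_or big1 // => k _; rewrite /pospart max_r //.
  by rewrite subr_le0 (water_filling_le wf).
have loss_ud_ge0 : 0 <= loss_ud d b.
  by rewrite sumr_ge0 // => k _; rewrite /pospart le_max lexx orbT.
rewrite /loss loss_or0 addr0 /loss_ur.
case: full_or_served => [-> | served]; first by rewrite subrr min_l.
have -> : loss_ud d b = 0.
  by rewrite /loss_ud big1 // => k _; rewrite served subrr /pospart max_l.
by rewrite min_r // subr_ge0.
Qed.

Lemma water_filling_misreport_le (i : 'I_n) (d d' b b' : 'I_n -> R) :
  (forall k, k != i -> d' k = d k) -> water_filling d b -> water_filling d' b' ->
  b' i < d' i -> b i <= b' i.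
Proof.
move=> d'E [lam _ [bE sumb_le1 _]] [lam' _ [b'E _ full_or_served]] b'i_lt.
have b'i : b' i = lam' * e i.
  by move: (b'i_lt); rewrite b'E gt_min ltxx /= => /ltW /min_idPr.
have sumb'1 : \sum_k b' k = 1.
  by case: full_or_served => // served; move: (b'i_lt); rewrite served ltxx.
rewrite leNgt; apply/negP => b'i_lt_bi.
have lam'_lt : lam' < lam.
  rewrite -(ltr_pM2r (e_gt0 i)) -b'i (lt_le_trans b'i_lt_bi) //.
  by rewrite bE ge_min lexx orbT.
have : \sum_k b' k < \sum_k b k.
  rewrite (bigD1 i) //= [X in _ < X](bigD1 i) //= ltr_leD // ler_sum // => k ki.
  by rewrite bE b'E d'E // le_min !ge_min lexx ler_pM2r // (ltW lam'_lt) !orbT.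
lra.
Qed.

End WaterFilling.

Section MmfLoop.
Variables (R : realFieldType) (n : nat) (e d : 'I_n -> R).
Hypothesis e_gt0 : forall i, 0 < e i.

Definition ratio_le (i j : 'I_n) : bool := d i / e i <= d j / e j.

Lemma ratio_le_trans : transitive ratio_le.
Proof. by move=> j i k; apply: le_trans. Qed.

Record mmf_invariant (s : seq 'I_n) (r E : R) (a : 'I_n -> R) : Prop := {
  inv_uniq : uniq s;
  inv_sorted : sorted ratio_le s;
  inv_entitlement : E = \sum_(k <- s) e k;
  inv_entitlement_le : E <= r;
  inv_alloc : forall k, a k = if k \in s then 0 else d k;
  inv_resource : \sum_k a k + r = 1;
  (* [d k / e k <= r / E], multiplied out so that it also holds once [E = 0] *)
  inv_level : forall k, k \notin s -> d k * E <= r * e k }.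

Lemma mmf_invariant_init :
  \sum_k e k = 1 -> mmf_invariant (mmf_order e d) 1 1 (fun=> 0).
Proof.
have mem_order k : k \in mmf_order e d by rewrite mem_sort mem_enum.
move=> sum_e1; split=> //.
- by rewrite sort_uniq enum_uniq.
- by apply: sort_sorted => i j; apply: le_total.
- by rewrite (perm_big _ (permEl (perm_sort _ _))) big_enum.
- by move=> k; rewrite mem_order.
- by rewrite big1_eq add0r.
- by move=> k; rewrite mem_order.
Qed.

Lemma mmf_invariant_done r E a : mmf_invariant [::] r E a -> water_filling e d a.
Proof.
case=> _ _ E0 E_le_r a_served a_sum _.
apply: water_filling_served => //.
by move: E_le_r; rewrite E0 big_nil; lra.
Qed.

Section LoopStep.
Variables (j : 'I_n) (s : seq 'I_n) (r E : R) (a : 'I_n -> R).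
Hypothesis inv : mmf_invariant (j :: s) r E a.

Let j_notin_s : j \notin s.
Proof. by have /andP [] := inv_uniq inv. Qed.

Let E_split : E = e j + \sum_(k <- s) e k.
Proof. by rewrite (inv_entitlement inv) big_cons. Qed.

Let E_gt0 : 0 < E.
Proof. by rewrite E_split ltr_pwDl // sumr_ge0 // => k _; apply: ltW. Qed.

Lemma mmf_invariant_step :
  d j < r * e j / E ->
  mmf_invariant s (r - d j) (E - e j) (fun k => if k == j then d j else a k).
Proof.
rewrite ltr_pdivlMr // => dj_lt.
have E_le_r := inv_entitlement_le inv.
have Ej_sum : E - e j = \sum_(k <- s) e k by rewrite E_split addrC addKr.
have Ej_ge0 : 0 <= E - e j by rewrite Ej_sum sumr_ge0 // => k _; apply: ltW.
split=> //.
- by have /andP [] := inv_uniq inv.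
- exact: path_sorted (inv_sorted inv).
- have rE_ge0 : 0 <= r - E by rewrite subr_ge0.
  have prod_ge0 := mulr_ge0 Ej_ge0 rE_ge0.
  by rewrite -(ler_pM2r E_gt0); nra.
- move=> k; case: (eqVneq k j) => [-> | k_neq_j]; first by rewrite (negPf j_notin_s).
  by rewrite (inv_alloc inv) in_cons (negPf k_neq_j).
- have aj0 : a j = 0 by rewrite (inv_alloc inv) mem_head.
  have := inv_resource inv; rewrite (bigD1 j) //= aj0 add0r => sum_a.
  rewrite (bigD1 j) //= eqxx; under eq_bigr => k /negPf -> do [].
  lra.
- move=> k k_notin_s.
  case: (eqVneq k j) => [-> | k_neq_j]; first by nra.
  have dk_le : d k * E <= r * e k.
    by apply: (inv_level inv); rewrite in_cons negb_or k_neq_j.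
  rewrite -(ler_pM2r E_gt0).
  have := ler_wpM2r Ej_ge0 dk_le.
  have := ler_wpM2l (ltW (e_gt0 k)) (ltW dj_lt).
  nra.
Qed.

Lemma mmf_invariant_stop :
  r * e j / E <= d j ->
  water_filling e d (fun k => if k \in j :: s then r * e k / E else a k).
Proof.
move=> dj_ge; set lam := r / E.
have lam_ge1 : 1 <= lam by rewrite ler_pdivlMr // mul1r (inv_entitlement_le inv).
have lam_le_j : lam <= d j / e j by rewrite ler_pdivlMr // /lam mulrAC.
have lam_le k : k \in j :: s -> lam * e k <= d k.
  rewrite -ler_pdivlMr // in_cons => /predU1P [-> // | k_in_s].
  apply: le_trans lam_le_j _.
  exact: allP (order_path_min ratio_le_trans (inv_sorted inv)) k k_in_s.
have allocE k : (if k \in j :: s then r * e k / E else a k)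
    = (if k \in j :: s then lam * e k else 0) + a k.
  by rewrite (inv_alloc inv); case: (k \in j :: s); rewrite ?addr0 ?add0r // mulrAC.
have sum1 : \sum_k (if k \in j :: s then r * e k / E else a k) = 1.
  under eq_bigr => k _ do rewrite allocE.
  rewrite big_split /= -big_mkcond -mulr_sumr -big_uniq ?(inv_uniq inv) //.
  by rewrite -(inv_entitlement inv) /lam divfK ?gt_eqF // addrC (inv_resource inv).
exists lam => //; split; [| by rewrite sum1 | by left].
move=> k; rewrite allocE (inv_alloc inv); case: ifP => k_in.
  by rewrite addr0 min_r ?lam_le.
rewrite add0r min_l // /lam mulrAC ler_pdivlMr //.
by apply: (inv_level inv); rewrite k_in.
Qed.
End LoopStep.

Lemma mmf_loop_water_filling s r E a :
  mmf_invariant s r E a -> water_filling e d (mmf_loop e d s r E a).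
Proof.
elim: s r E a => [|j s IHs] r E a inv /=; first exact: mmf_invariant_done inv.
case: ifP => [dj_lt | /negbT]; first exact/IHs/mmf_invariant_step.
by rewrite -leNgt; apply: mmf_invariant_stop.
Qed.

Lemma mmf_water_filling : \sum_k e k = 1 -> water_filling e d (mmf e d).
Proof. by move=> sum_e1; apply/mmf_loop_water_filling/mmf_invariant_init. Qed.

End MmfLoop.

Theorem theorem1 (R : realFieldType) (n : nat) (hn : (0 < n)%N)
  (e : 'I_n -> R) (he : forall i, 0 < e i) (hsum : \sum_i e i = 1)
  (dstar : 'I_n -> R) (hdstar : forall i, 0 <= dstar i)
  (u : 'I_n -> R -> R)
  (hu0 : forall i x, 0 <= x -> 0 <= u i x)
  (hinc : forall i x y, 0 <= x -> x < y -> y <= dstar i -> u i x < u i y)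
  (hconst : forall i x, dstar i <= x -> u i x = u i (dstar i)) :
  [/\ (* (i) efficiency *)
      loss dstar (mmf e dstar) = 0,
      (* (ii) fairness *)
      forall (i : 'I_n) (d : 'I_n -> R), (forall j, 0 <= d j) -> d i = dstar i ->
        u i (e i) <= u i (mmf e d i)
    & (* (iii) strategy-proofness *)
      forall (i : 'I_n) (d : 'I_n -> R), (forall j, 0 <= d j) ->
        u i (mmf e d i) <= u i (mmf e (fun k => if k == i then dstar i else d k) i)].
Proof.
have wf d : water_filling e d (mmf e d) := mmf_water_filling d he hsum.
have u_mono i := sat_util_mono (hdstar i) (hinc i) (hconst i).
have u_minE i := sat_util_minE (hconst i).
split.
- exact: water_filling_loss (wf dstar).
- move=> i d d_ge0 di; rewrite u_minE -di; apply: u_mono.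
    by rewrite le_min ltW // d_ge0.
  exact: water_filling_entitlement (wf d).
- move=> i d d_ge0; set d' := fun k => if k == i then dstar i else d k.
  have d'i : d' i = dstar i by rewrite /d' eqxx.
  have d'E k : k != i -> d' k = d k by rewrite /d' => /negPf ->.
  have mmf_ge0 := water_filling_ge0 he (d_ge0 i) (wf d).
  case: (ltP (mmf e d' i) (d' i)) => [lt_d'i | ge_d'i].
    by apply/u_mono/(water_filling_misreport_le he d'E (wf d) (wf d')).
  have -> : mmf e d' i = dstar i.
    by apply/le_anti; rewrite -d'i ge_d'i (water_filling_le (wf d')).
  rewrite u_minE; apply: u_mono; first by rewrite le_min mmf_ge0 hdstar.
  by rewrite ge_min lexx orbT.
Qed.
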